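(* Let $n\ge1$, $k\ge1$ be integers and $p$ a prime with $p\nmid n$. Then $$\Phi^*_{p^kn}(x)=\frac{\Phi^*_n(x^{p^k})}{\Phi^*_n(x)}.$$
   Context: $d\mid\mid n$ means $d\mid n$ and $\gcd(d,n/d)=1$; $(j,n)_*=\max\{d: d\mid j,\ d\mid\mid n\}$; $\Phi^*_n(x)=\prod_{1\le j\le n,\ (j,n)_*=1}(x-e^{2\pi i j/n})$. *)

From HB Require Import structures.
From mathcomp Require Import all_boot all_order all_algebra all_field.
Set Implicit Arguments. Unset Strict Implicit. Unset Printing Implicit Defensive.
Import GRing.Theory Num.Theory.

Definition udvd (d n : nat) : bool := (d %| n) && coprime d (n %/ d).

Definition ugcd (j n : nat) : nat :=
  \max_(d < n.+1 | (d %| j) && udvd d n) d.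

(* Unitary cyclotomic polynomial Phi*_n, built from a primitive n-th root of
   unity z (playing the role of e^{2 pi i / n}):
   prod_{1 <= j <= n, (j,n)_* = 1} (X - z^j). *)
Definition ucyclotomic {R : nzRingType} (z : R) (n : nat) : {poly R} :=
  (\prod_(1 <= j < n.+1 | ugcd j n == 1%N) ('X - (z ^+ j)%:P))%R.

From HB Require Import structures.
From mathcomp Require Import all_boot all_order all_algebra all_field.
Import GRing.Theory Num.Theory.

Set Implicit Arguments.
Unset Strict Implicit.
Unset Printing Implicit Defensive.

(* For p not dividing n, the unitary divisors of p^k n are the d and p^k d
   with d || n, so (j, p^k n)_* = 1 iff (j, n)_* = 1 and p^k does not divide j.
   With w = z^(p^k), substituting X^(p^k) turns each factor X - w^t of
   Phi*_n(X) into prod_(m < p^k) (X - z^(t + n m)), so Phi*_n(X^(p^k)) is the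
   product of the X - z^s over the s mod p^k n with (s, n)_* = 1.  The s
   divisible by p^k give back Phi*_n(X), the others give Phi*_(p^k n)(X). *)

Lemma leq_ugcd d j n : 0 < n -> udvd d n -> d %| j -> d <= ugcd j n.
Proof.
move=> n_gt0 ud dj; have d_lt : d < n.+1 by rewrite ltnS dvdn_leq // (andP ud).1.
by apply: (leq_bigmax_cond (P := fun i : 'I_n.+1 => (i %| j) && udvd i n)
  (F := @nat_of_ord n.+1) (Ordinal d_lt)); rewrite /= dj ud.
Qed.

Lemma ugcd_eq1P j n : 0 < n ->
  reflect (forall d, udvd d n -> d %| j -> d = 1) (ugcd j n == 1).
Proof.
move=> n_gt0; apply: (iffP eqP) => [ug1 d ud dj | ud1].
  have d_gt0 : 0 < d by apply: dvdn_gt0 n_gt0 (andP ud).1.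
  by apply/eqP; rewrite eqn_leq d_gt0 -ug1 leq_ugcd.
apply/eqP; rewrite eqn_leq; apply/andP; split.
  by apply/bigmax_leqP => d /andP[dj ud]; rewrite (ud1 d ud dj).
by rewrite leq_ugcd // /udvd dvd1n coprime1n.
Qed.

Lemma ugcd_modl j n : ugcd (j %% n) n = ugcd j n.
Proof.
apply: eq_bigl => d; rewrite /udvd.
by case dn: (d %| n); rewrite ?andbF //= /dvdn modn_dvdm.
Qed.

Lemma ugcd_mull q j n : coprime q n -> ugcd (q * j) n = ugcd j n.
Proof.
move=> qn; apply: eq_bigl => d; rewrite /udvd.
case dn: (d %| n); rewrite ?andbF //= Gauss_dvdr //.
by rewrite coprime_sym (coprime_dvdr dn) // coprime_sym.
Qed.

Lemma udvd_mull q d n : coprime q n -> udvd d n -> udvd d (q * n).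
Proof.
move=> qn /andP[dn cd]; rewrite /udvd dvdn_mull //= -muln_divA // coprimeMr cd.
by rewrite andbT coprime_sym (coprime_dvdr dn) // coprime_sym.
Qed.

Lemma udvd_mulr q n : 0 < q -> coprime q n -> udvd q (q * n).
Proof. by move=> q_gt0 qn; rewrite /udvd dvdn_mulr // mulKn. Qed.

Lemma udvd_gcdr d m n : udvd d m -> n %| m -> udvd (gcdn d n) n.
Proof.
move=> /andP[dm cd] nm; rewrite /udvd dvdn_gcdr /=.
have d_gt0 : 0 < d by case: d {dm} cd => // /eqP; rewrite gcd0n.
apply: coprime_dvdl (dvdn_gcdl d n) (coprime_dvdr _ cd).
rewrite dvdn_divRL // mulnC muln_divA ?dvdn_gcdr //.
by rewrite -/(lcmn d n) dvdn_lcm dm.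
Qed.

Lemma udvd_pfactor p k d : prime p -> udvd d (p ^ k) -> (d == 1) || (d == p ^ k).
Proof.
move=> p_pr /andP[/(dvdn_pfactor _ _ p_pr)[i ik ->]].
rewrite -expnB ?prime_gt0 //; case: i ik => [|i] ik; first by rewrite eqxx.
rewrite coprime_pexpl //; case: (posnP (k - i.+1)) => [ki0 _ | ki_gt0].
  by rewrite eqn_exp2l ?prime_gt1 // orbC eqn_leq ik -subn_eq0 ki0.
by rewrite coprime_pexpr // prime_coprime // dvdnn.
Qed.

Lemma ugcd_pfactor_mul_eq1 p k n j : prime p -> 0 < k -> 0 < n -> ~~ (p %| n) ->
  (ugcd j (p ^ k * n) == 1) = (ugcd j n == 1) && ~~ (p ^ k %| j).
Proof.
move=> p_pr k_gt0 n_gt0 pNn; set q := p ^ k.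
have q_gt1 : 1 < q by rewrite -(expn0 p) ltn_exp2l ?prime_gt1.
have qn : coprime q n by rewrite coprime_pexpl // prime_coprime.
have qn_gt0 : 0 < q * n by rewrite muln_gt0 n_gt0 ltnW.
apply/(ugcd_eq1P _ qn_gt0)/andP => [ud1 | [/(ugcd_eq1P _ n_gt0) ud1 qNj] d ud dj].
  split; first by apply/(ugcd_eq1P _ n_gt0) => d ud; apply/ud1/udvd_mull.
  by apply/negP => /(ud1 q (udvd_mulr (ltnW q_gt1) qn)) q1; rewrite q1 in q_gt1.
have dn1 : gcdn d n = 1.
  by apply: ud1 (udvd_gcdr ud (dvdn_mull q (dvdnn n))) (dvdn_trans (dvdn_gcdl d n) dj).
have dq1 : gcdn d q = 1.
  have /orP[/eqP // | /eqP dq] := udvd_pfactor p_pr (udvd_gcdr ud (dvdn_mulr n (dvdnn q))).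
  by move: qNj; rewrite /q -dq (dvdn_trans (dvdn_gcdl d q) dj).
have dqn : coprime d (q * n) by rewrite coprimeMr /coprime dn1 dq1.
by rewrite -(gcdn_idPl (andP ud).1); apply/eqP: dqn.
Qed.

Section BigNatMul.

Variables (R : Type) (idx : R) (op : Monoid.law idx).

Lemma big_nat_mulE a b F :
  \big[op/idx]_(0 <= s < a * b) F s =
  \big[op/idx]_(0 <= i < a) \big[op/idx]_(0 <= j < b) F (i * b + j).
Proof.
rewrite big_nat_mul; apply: eq_bigr => i _.
by rewrite -{1}[i * b]add0n big_addn mulSn addnK; under eq_bigr do rewrite addnC.
Qed.

Lemma big_nat_mul_dvdn q n (P : pred nat) F : 0 < q ->
  \big[op/idx]_(0 <= s < q * n | P s && (q %| s)) F s =
  \big[op/idx]_(0 <= i < n | P (q * i)) F (q * i).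
Proof.
move=> q_gt0; rewrite big_mkcond mulnC big_nat_mulE [RHS]big_mkcond.
apply: eq_bigr => i _; rewrite big_ltn // addn0 mulnC dvdn_mulr // andbT.
rewrite big1_seq ?Monoid.mulm1 // => j /andP[_]; rewrite mem_index_iota => /andP[j_gt0 jq].
by rewrite dvdn_addr ?dvdn_mulr // gtnNdvd // andbF.
Qed.

End BigNatMul.

Local Open Scope ring_scope.

Lemma ucyclotomicE (R : comNzRingType) (z : R) n : (0 < n)%N -> z ^+ n = 1 ->
  ucyclotomic z n = \prod_(0 <= j < n | ugcd j n == 1%N) ('X - (z ^+ j)%:P).
Proof.
move=> n_gt0 zn; rewrite /ucyclotomic big_mkcond big_nat_recr //= [RHS]big_mkcond [RHS]big_ltn //=.
by rewrite -(ugcd_modl n n) modnn zn -(expr0 z) mulrC.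
Qed.

Lemma factor_Xn_subC (F : fieldType) q (u c : F) : q.-primitive_root u ->
  \prod_(0 <= m < q) ('X - (c * u ^+ m)%:P) = 'X^q - (c ^+ q)%:P.
Proof.
move=> pu; have q_gt0 := prim_order_gt0 pu.
have [->|c0] := eqVneq c 0.
  rewrite expr0n gtn_eqF // subr0.
  by under eq_bigr do rewrite mul0r subr0; rewrite prodr_const_nat subn0.
set rs := [seq c * u ^+ i | i <- index_iota 0 q].
rewrite -(big_map (fun i => c * u ^+ i) xpredT (fun w => 'X - w%:P)) -/rs.
rewrite [RHS](@all_roots_prod_XsubC _ _ rs).
- by rewrite lead_coefXnsubC // scale1r.
- by rewrite size_XnsubC // size_map size_iota subn0.
- apply/allP => _ /mapP[i _ ->]; rewrite rootE !hornerE.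
  by rewrite exprMn exprAC (prim_expr_order pu) expr1n mulr1 subrr.
rewrite uniq_rootsE map_inj_in_uniq ?iota_uniq // => i j.
rewrite !mem_index_iota => /andP[_ iq] /andP[_ jq] /(mulfI c0) /eqP.
by rewrite (eq_prim_root_expr pu) !modn_small // => /eqP.
Qed.

Lemma ucyclotomic_comp_Xn (F : fieldType) q n (z : F) : (0 < n)%N ->
  (q * n).-primitive_root z ->
  ucyclotomic (z ^+ q) n \Po 'X^q =
    \prod_(0 <= s < q * n | ugcd s n == 1%N) ('X - (z ^+ s)%:P).
Proof.
move=> n_gt0 pz.
have pu : q.-primitive_root (z ^+ n) by have := exp_prim_root pz n; rewrite gcdnMl mulnK.
have wn : (z ^+ q) ^+ n = 1 by rewrite -exprM prim_expr_order.
rewrite ucyclotomicE // rmorph_prod.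
rewrite [RHS]big_mkcond big_nat_mulE exchange_big_nat /= big_mkcond.
apply: eq_bigr => t _.
under eq_bigr do rewrite -ugcd_modl modnMDl ugcd_modl.
case: ifP => _; last by rewrite big1 ?comp_polyC.
rewrite comp_polyB comp_polyX comp_polyC exprAC -(factor_Xn_subC _ pu).
by apply: eq_bigr => m _; rewrite -exprM -exprD addnC mulnC.
Qed.

Theorem mainTheorem8 (n k p : nat) (z : algC) :
  (1 <= n)%N -> (1 <= k)%N -> prime p -> ~~ (p %| n)%N ->
  (p ^ k * n)%N.-primitive_root z ->
  ucyclotomic z (p ^ k * n) =
    (ucyclotomic (z ^+ (p ^ k)) n \Po 'X^(p ^ k)) %/ ucyclotomic (z ^+ (p ^ k)) n.
Proof.
move=> n_gt0 k_gt0 p_pr pNn pz; set q := (p ^ k)%N.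
have q_gt0 : (0 < q)%N by rewrite expn_gt0 prime_gt0.
have qn : coprime q n by rewrite coprime_pexpl // prime_coprime.
have zqn : z ^+ (q * n) = 1 := prim_expr_order pz.
have wn : (z ^+ q) ^+ n = 1 by rewrite -exprM.
rewrite (ucyclotomic_comp_Xn n_gt0 pz) (bigID (dvdn q)) /= big_nat_mul_dvdn //.
have -> : \prod_(0 <= i < n | ugcd (q * i) n == 1%N) ('X - (z ^+ (q * i))%:P) =
    ucyclotomic (z ^+ q) n.
  by rewrite ucyclotomicE //; apply: eq_big => [i | i _]; rewrite ?ugcd_mull // exprM.
rewrite mulKp ?monic_neq0 ?monic_prod_XsubC // ucyclotomicE ?muln_gt0 ?q_gt0 //.
by apply: eq_bigl => s; rewrite ugcd_pfactor_mul_eq1.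
Qed.
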